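(* Let $\approx$ be an equinumerosity on $\mathbb{W}$ and let $A,B\in\mathbb W$ with $A\approx B$. Then for every proper superset $A'\in\mathbb W$ of $A$ there exists a proper superset $B'\in\mathbb W$ of $B$ such that $A'\approx B'$.
   Context: Let $\mathbb N=\{0,1,2,\dots\}$. Let $\mathbb{W}$ be the family of finitary point sets: sets $A\subseteq\bigcup_{k\ge1}\mathbb N^k$ of finite tuples of natural numbers (tuples of different lengths allowed) such that for every $n\in\mathbb N$ there is $h$ with $A\cap\{0,\dots,n\}^k=\emptyset$ for all $k>h$. Cartesian products are identified with concatenations: $A\times B=\{(a_1,\dots,a_k,b_1,\dots,b_h):(a_1,\dots,a_k)\in A,\ (b_1,\dots,b_h)\in B\}$; $\{n\}$ denotes the set whose only element is the 1-tuple $(n)$. $A,B\in\mathbb W$ are multipliable if distinct pairs $(a,b)\in A\times B$ have distinct concatenations. Given an equivalence relation $\approx$ on $\mathbb W$, write $A\succ B$, equivalently $B\prec A$, if there exist $A',B'\in\mathbb W$ with $B'\subsetneq A'$, $A\approx A'$ and $B\approx B'$. An equinumerosity is an equivalence relation $\approx$ on $\mathbb W$ such that for all $A,B\in\mathbb W$: (AP) $A\approx B$ iff $A\setminus B\approx B\setminus A$; (ZP) exactly one of $A\approx B$, $A\succ B$, $A\prec B$ holds; (TP) if $T$ is injective on $A$ and $T(a)$ is a permutation of the coordinates of $a$ for every $a\in A$, then $A\approx T[A]$; (UP) $A\times\{n\}\approx A$ for all $n\in\mathbb N$; (PP) if $A,B$ are multipliable, $A',B'$ are multipliable, $A\approx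 A'$ and $B\approx B'$, then $A\times B\approx A'\times B'$. *)

From mathcomp Require Import all_boot.
Set Implicit Arguments. Unset Strict Implicit. Unset Printing Implicit Defensive.

Definition pset := seq nat -> Prop.

Definition W (A : pset) : Prop :=
  (forall a, A a -> 0 < size a) /\
  forall n : nat, exists h : nat, forall a, A a -> h < size a ->
    ~ (all (fun x => x <= n) a).

Definition subset (A B : pset) : Prop := forall a, A a -> B a.
Definition psubset (B A : pset) : Prop := subset B A /\ exists a, A a /\ ~ B a.
Definition setminus (A B : pset) : pset := fun a => A a /\ ~ B a.

(* Cartesian product = concatenation *)
Definition pprod (A B : pset) : pset :=
  fun c => exists a b, A a /\ B b /\ c = a ++ b.
Definition psing (n : nat) : pset := fun c => c = [:: n].
Definition pimage (T : seq nat -> seq nat) (A : pset) : pset :=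
  fun c => exists a, A a /\ c = T a.

Definition multipliable (A B : pset) : Prop :=
  forall a1 b1 a2 b2, A a1 -> B b1 -> A a2 -> B b2 ->
    a1 ++ b1 = a2 ++ b2 -> a1 = a2 /\ b1 = b2.

Definition succ (R : pset -> pset -> Prop) (A B : pset) : Prop :=
  exists A' B', W A' /\ W B' /\ psubset B' A' /\ R A A' /\ R B B'.

Definition equinumerosity (R : pset -> pset -> Prop) : Prop :=
  (forall A, W A -> R A A) /\
  (forall A B, W A -> W B -> R A B -> R B A) /\
  (forall A B C, W A -> W B -> W C -> R A B -> R B C -> R A C) /\
  (* AP *)
  (forall A B, W A -> W B -> (R A B <-> R (setminus A B) (setminus B A))) /\
  (forall A B, W A -> W B ->
     (R A B /\ ~ succ R A B /\ ~ succ R B A) \/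
     (~ R A B /\ succ R A B /\ ~ succ R B A) \/
     (~ R A B /\ ~ succ R A B /\ succ R B A)) /\
  (forall A (T : seq nat -> seq nat), W A ->
     (forall a b, A a -> A b -> T a = T b -> a = b) ->
     (forall a, A a -> perm_eq (T a) a) ->
     R A (pimage T A)) /\
  (* UP *)
  (forall A (n : nat), W A -> R (pprod A (psing n)) A) /\
  (forall A B A' B', W A -> W B -> W A' -> W B' ->
     multipliable A B -> multipliable A' B' -> R A A' -> R B B' ->
     R (pprod A B) (pprod A' B')).

(* Adjoin to B a copy D of A' \ A that is disjoint from A' and from B; then
   A' ≈ A ∪ D ≈ B ∪ D, both steps by AP. The copy D replaces each c ∈ A' \ A by its
   first tag c 0 1^i outside Z := A' ∪ B. Among all tags c 0 1^i whose predecessors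
   lie in Z, the taken ones are, after appending 1 (harmless by UP), exactly the
   tags other than c 0; so AP identifies the free tags with the c 0, i.e. with c (UP). *)
From Pilot Require Import Defs.
From mathcomp Require Import all_boot zify.
From Stdlib Require Import Classical FunctionalExtensionality PropExtensionality.
Set Implicit Arguments. Unset Strict Implicit.

Definition punion (A B : pset) : pset := fun a => A a \/ B a.
Definition pinter (A B : pset) : pset := fun a => A a /\ B a.
Definition pdisjoint (A B : pset) : Prop := forall a, A a -> ~ B a.

Lemma pset_ext (A B : pset) : (forall a, A a <-> B a) -> A = B.
Proof.
move=> AB; apply: functional_extensionality => a.
exact: propositional_extensionality.
Qed.

Lemma W_subset (A B : pset) : W B -> Defs.subset A B -> W A.
Proof.
move=> [B_pos B_fin] AB; split=> [a /AB /B_pos //|n].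
have [h Bh] := B_fin n; exists h => a /AB; exact: Bh.
Qed.

Lemma W_union (A B : pset) : W A -> W B -> W (punion A B).
Proof.
move=> [A_pos A_fin] [B_pos B_fin]; split=> [a [/A_pos|/B_pos] //|n].
have [hA HA] := A_fin n; have [hB HB] := B_fin n.
exists (hA + hB) => a [Aa|Ba] ha.
- by apply: HA Aa _; lia.
- by apply: HB Ba _; lia.
Qed.

Lemma bounded_seq (s : seq nat) : exists n, all (fun x => x <= n) s.
Proof. by exists (\max_(x <- s) x); apply/allP => x sx; exact: leq_bigmax_seq. Qed.

Definition tag (c : seq nat) (i : nat) : seq nat := c ++ 0 :: nseq i 1.

Lemma tagS c i : tag c i.+1 = tag c i ++ [:: 1].
Proof. by rewrite /tag -catA /= -[1 :: _]/(nseq i.+1 1) -addn1 nseqD. Qed.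

Definition tagged (C Z : pset) : pset := fun u =>
  exists c i, C c /\ u = tag c i /\ forall j, j < i -> Z (tag c j).

Lemma W_tagged C Z : W C -> W Z -> W (tagged C Z).
Proof.
move=> [C_pos C_fin] [_ Z_fin]; split=> [u [c [i [_ [-> _]]]]|n].
  by rewrite size_cat addnS.
have [hC HC] := C_fin n; have [hZ HZ] := Z_fin n.
exists (hC + hZ).+1 => u [c [[|i] [Cc [-> Zc]]]]; rewrite ?tagS size_cat all_cat => hu.
- by case/andP=> cn _; apply: HC Cc _ cn; rewrite /= in hu; lia.
- by case/andP=> Zcn _; apply: HZ (Zc i (ltnSn i)) _ Zcn; rewrite /= in hu; lia.
Qed.

Lemma tagged_untag C Z : Defs.subset (pprod C (psing 0)) (tagged C Z).
Proof. by move=> u [c [_ [Cc [-> ->]]]]; exists c, 0. Qed.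

Lemma tagged_retag C Z :
  setminus (tagged C Z) (pprod C (psing 0)) = pprod (pinter (tagged C Z) Z) (psing 1).
Proof.
apply: pset_ext => u; split.
- move=> [[c [[|i] [Cc [-> Zc]]]] untagged].
    by case: untagged; exists c, [:: 0].
  exists (tag c i), [:: 1]; split; last by rewrite tagS.
  split; last exact: Zc.
  by exists c, i; split=> //; split=> // j ji; apply: Zc; lia.
- move=> [_ [_ [[[c [i [Cc [-> Zc]]]] Zci] [-> ->]]]]; split.
    exists c, i.+1; split=> //; split; first by rewrite tagS.
    by move=> j; rewrite ltnS leq_eqVlt => /orP [/eqP -> //|]; exact: Zc.
  move=> [c' [_ [_ [-> /(congr1 (@last nat 0))]]]].
  by rewrite !cats1 !last_rcons.
Qed.

Lemma tagged_free C Z c : W Z -> C c -> exists u, tagged C Z u /\ ~ Z u.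
Proof.
move=> [_ Z_fin] Cc.
have [n cn] := bounded_seq c; have [h Zh] := Z_fin (maxn n 1).
have Zch : ~ Z (tag c h).
  move=> /Zh; apply; first by rewrite size_cat /= size_nseq; lia.
  rewrite all_cat (sub_all _ cn) /= ?all_nseq ?leq_maxr ?orbT // => x xn.
  exact: leq_trans xn (leq_maxl _ _).
have first_free i : (forall j, j < i -> Z (tag c j)) \/ exists u, tagged C Z u /\ ~ Z u.
  elim: i => [|i [Zc|free]]; [by left | | by right].
  have [Zci|Zci] := classic (Z (tag c i)).
    by left=> j; rewrite ltnS leq_eqVlt => /orP [/eqP -> //|]; exact: Zc.
  by right; exists (tag c i); split=> //; exists c, i.
by case: (first_free h.+1) => [Zc|//]; case: Zch; exact: Zc.
Qed.

Section Equinumerosity.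

Variable R : pset -> pset -> Prop.
Hypothesis HR : equinumerosity R.

Lemma eqn_sym A B : W A -> W B -> R A B -> R B A.
Proof. by case: HR => _ [sym _]; exact: sym. Qed.

Lemma eqn_trans A B C : W A -> W B -> W C -> R A B -> R B C -> R A C.
Proof. by case: HR => _ [_ [trans _]]; exact: trans. Qed.

Lemma eqn_diff A B : W A -> W B -> R A B <-> R (setminus A B) (setminus B A).
Proof. by case: HR => _ [_ [_ [AP _]]]; exact: AP. Qed.

Lemma eqn_unit A n : W A -> R (pprod A (psing n)) A.
Proof. by case: HR => _ [_ [_ [_ [_ [_ [UP _]]]]]]; exact: UP. Qed.

(* Since [C ⊆ U], the two differences of [U \ C] and [U ∩ Z] are those of [U \ Z] and [C]. *)
Lemma eqn_setminus_swap U C Z : W U -> Defs.subset C U ->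
  R (setminus U C) (pinter U Z) -> R (setminus U Z) C.
Proof.
move=> WU CU.
have W_U P : Defs.subset P U -> W P by exact: W_subset.
have WUC : W (setminus U C) by apply: W_U => a [].
have WUZ : W (pinter U Z) by apply: W_U => a [].
have WUmZ : W (setminus U Z) by apply: W_U => a [].
move/(eqn_diff WUC WUZ).
have -> : setminus (setminus U C) (pinter U Z) = setminus (setminus U Z) C.
  apply: pset_ext => a; split=> [[[Ua Ca] UZa]|[[Ua Za] Ca]]; do !split=> //.
    by move=> Za; apply: UZa.
  by case.
have -> : setminus (pinter U Z) (setminus U C) = setminus C (setminus U Z).
  apply: pset_ext => a; split=> [[[Ua Za] UCa]|[Ca UZa]].
    by split=> [|[]//]; apply: NNPP => Ca; apply: UCa.
  have Ua := CU a Ca.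
  by split=> [|[]//]; split=> //; apply: NNPP => Za; apply: UZa.
by move/(eqn_diff WUmZ (W_U C CU)).
Qed.

Lemma eqn_disjoint_copy C Z : W C -> W Z -> (exists c, C c) ->
  exists D, W D /\ R D C /\ pdisjoint D Z /\ exists d, D d.
Proof.
move=> WC WZ [c Cc].
have WU := W_tagged WC WZ.
have W_U P : Defs.subset P (tagged C Z) -> W P by exact: W_subset.
have WC0 := W_U _ (@tagged_untag C Z).
have WUZ : W (pinter (tagged C Z) Z) by apply: W_U => a [].
exists (setminus (tagged C Z) Z); split; first by apply: W_U => a [].
split; last by split=> [a []//|]; have [u [] *] := tagged_free WZ Cc; exists u.
apply: eqn_trans (eqn_unit 0 WC) => //; first by apply: W_U => a [].
apply: (eqn_setminus_swap WU (@tagged_untag C Z)).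
by rewrite tagged_retag; exact: eqn_unit.
Qed.

Lemma eqn_union_disjoint A B D : W A -> W B -> W D ->
  pdisjoint D A -> pdisjoint D B -> R A B -> R (punion A D) (punion B D).
Proof.
move=> WA WB WD DA DB /(eqn_diff WA WB).
have diff P Q : pdisjoint D P ->
    setminus (punion P D) (punion Q D) = setminus P Q.
  move=> DP; apply: pset_ext => a; split=> [[[Pa|Da] PQa]|[Pa Qa]].
  - by split=> // Qa; apply: PQa; left.
  - by case: PQa; right.
  - by split=> [|[//|/DP]]; [left | apply].
rewrite -(diff A B DA) -(diff B A DB).
by move/(eqn_diff (W_union WA WD) (W_union WB WD)).
Qed.

Lemma eqn_union_setminus A A' D : W A -> W A' -> W D ->
  Defs.subset A A' -> pdisjoint D A' -> R (setminus A' A) D -> R A' (punion A D).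
Proof.
move=> WA WA' WD AA' DA' RD; apply/(eqn_diff WA' (W_union WA WD)).
have -> : setminus A' (punion A D) = setminus A' A.
  apply: pset_ext => a; split=> [[A'a AD]|[A'a Aa]].
    by split=> // Aa; apply: AD; left.
  by split=> // -[//|/DA']; apply.
have -> : setminus (punion A D) A' = D.
  apply: pset_ext => a; split=> [[[/AA' //|//]]|Da].
  by split; [right | exact: DA'].
exact: RD.
Qed.

End Equinumerosity.

Theorem lemma1p5 (R : pset -> pset -> Prop) :
  equinumerosity R ->
  forall A B : pset, W A -> W B -> R A B ->
  forall A' : pset, W A' -> psubset A A' ->
  exists B' : pset, W B' /\ psubset B B' /\ R A' B'.
Proof.
move=> HR A B WA WB RAB A' WA' [AA' [x [A'x Ax]]].
have WC : W (setminus A' A) by apply: W_subset WA' _ => a [].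
have [D [WD [RDC [DA'B [d Dd]]]]] :=
  eqn_disjoint_copy HR WC (W_union WA' WB) (ex_intro _ x (conj A'x Ax)).
have DA' : pdisjoint D A' by move=> a Da A'a; apply: DA'B Da _; left.
have DB : pdisjoint D B by move=> a Da Ba; apply: DA'B Da _; right.
have DA : pdisjoint D A by move=> a Da /AA'; exact: DA'.
exists (punion B D); split; first exact: W_union.
split; first by split=> [a Ba|]; [left | exists d; split; [right | exact: DB]].
apply: (eqn_trans HR WA' (W_union WA WD) (W_union WB WD)).
- exact: (eqn_union_setminus HR WA WA' WD AA' DA' (eqn_sym HR WD WC RDC)).
- exact: (eqn_union_disjoint HR WA WB WD DA DB RAB).
Qed.
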